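(* For every state transition function $\tau: S\times A^{N}\to S$ there exists an action theory $\gamma=(\gamma^+,\gamma^-)$ that is equivalent to $\tau$, i.e. for every state $s\in S$ and every joint action $\bar a\in A^N$, the successor state of $s$ under $\bar a$ determined by $\gamma$ equals $\tau(s,\bar a)$ (so $\gamma$ and $\tau$ generate exactly the same histories from any initial state under any sequence of joint actions). Moreover, the size of $\gamma$ is at most polynomial in the size of the explicit table representation of $\tau$ (the table listing, for each of the $|A|^{|N|}\cdot 2^{|P|}$ pairs $(s,\bar a)$, the state $\tau(s,\bar a)$).
   Context: Let $N$ be a finite set of agents, $P$ a finite set of propositional atoms, $S=2^P$ the set of states, and $A$ a finite nonempty set of action names. The language $\mathcal{L}_{PL+}$ is generated by $\phi ::= p \mid do(i,a) \mid \neg\phi \mid \phi\wedge\phi$ with $p\in P$, $i\in N$, $a\in A$. Such a formula is evaluated at a pair $(s,\bar a)$ of a state and a joint action $\bar a\in A^N$: $p$ holds iff $p\in s$, $do(i,a)$ holds iff $\bar a(i)=a$, Boolean connectives as usual. An action theory is a pair $\gamma=(\gamma^+,\gamma^-)$ of functions $N\times A\times P\to\mathcal{L}_{PL+}$. The successor of $s$ under $\bar a$ determined by $\gamma$ is $(s\setminus D)\cup U$, where $D$ is the set of $p\in P$ such that $(s,\bar a)\models\gamma^-(i,\bar a(i),p)$ for some $i\in N$ and $(s,\bar a)\models\neg\gamma^+(j,\bar a(j),p)$ for all $j\in N$, and $U$ is the set of $p\in P$ such that $(s,\bar a)\models\gamma^+(i,\bar a(i),p)$ for some $i\in N$ and $(s,\bar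 a)\models\neg\gamma^-(j,\bar a(j),p)$ for all $j\in N$ (inertia: if actions conflict on $p$, its truth value does not change). A state transition function is any function $\tau:S\times A^N\to S$. *)

From mathcomp Require Import all_boot.
Set Implicit Arguments. Unset Strict Implicit. Unset Printing Implicit Defensive.

Inductive plform (N P A : Type) : Type :=
| PAtom : P -> plform N P A
| PDo   : N -> A -> plform N P A
| PNeg  : plform N P A -> plform N P A
| PAnd  : plform N P A -> plform N P A -> plform N P A.

Section Sem.
Variables (N P A : finType).

Definition state := {set P}.
Definition jaction := {ffun N -> A}.

Fixpoint holds (s : state) (ja : jaction) (f : plform N P A) : bool :=
  match f with
  | PAtom p => p \in s
  | PDo i a => ja i == a
  | PNeg g => ~~ holds s ja g
  | PAnd g h => holds s ja g && holds s ja h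
  end.

Definition action_theory :=
  ((N -> A -> P -> plform N P A) * (N -> A -> P -> plform N P A))%type.

Definition gplus (g : action_theory) := g.1.
Definition gminus (g : action_theory) := g.2.

Definition del_set (g : action_theory) (s : state) (ja : jaction) : state :=
  [set p | [exists i, holds s ja (gminus g i (ja i) p)]
           && [forall j, ~~ holds s ja (gplus g j (ja j) p)]].

Definition upd_set (g : action_theory) (s : state) (ja : jaction) : state :=
  [set p | [exists i, holds s ja (gplus g i (ja i) p)]
           && [forall j, ~~ holds s ja (gminus g j (ja j) p)]].

Definition successor (g : action_theory) (s : state) (ja : jaction) : state :=
  (s :\: del_set g s ja) :|: upd_set g s ja.

Definition equivalent (g : action_theory) (tau : state -> jaction -> state) :=
  forall s ja, successor g s ja = tau s ja.

End Sem.

Fixpoint fsize (N P A : Type) (f : plform N P A) : nat :=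
  match f with
  | PAtom _ => 1
  | PDo _ _ => 1
  | PNeg g => (fsize g).+1
  | PAnd g h => (fsize g + fsize h).+1
  end.

Definition theory_size (N P A : finType) (g : action_theory N P A) : nat :=
  \sum_(i : N) \sum_(a : A) \sum_(p : P)
     (fsize (gplus g i a p) + fsize (gminus g i a p)).

(* size of the explicit table of tau: |A|^|N| * 2^|P| rows, each listing a
   state (|P| bits), a joint action (|N| entries) and the successor state
   (|P| bits). *)
Definition table_size (N P A : finType) : nat :=
  #|A| ^ #|N| * 2 ^ #|P| * (#|N| + 2 * #|P| + 1).

(** A joint action and a state together form a row of the transition table,
    and each row is pinned down by a conjunction of literals and [do]-atoms.
    Let [gamma^+(i, a, p)] be the disjunction of the rows whose successor
    contains [p], and [gamma^-(i, a, p)] the disjunction of the rows whose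
    successor omits [p].  In every situation exactly one of the two holds,
    uniformly in the agent, so no conflict arises and the successor is
    [tau(s, a)].  Each formula has at most one disjunct per row, each of
    size linear in [|N| + |P|], so the theory is quadratic in the table. *)

From mathcomp Require Import all_boot zify.
Set Implicit Arguments. Unset Strict Implicit. Unset Printing Implicit Defensive.

Section Theories.
Variables (N P A : finType).

Lemma successor_exact (g : action_theory N P A) (s t : state P) (ja : jaction N A) :
  0 < #|N| ->
  (forall i p, holds s ja (gplus g i (ja i) p) = (p \in t)) ->
  (forall i p, holds s ja (gminus g i (ja i) p) = (p \notin t)) ->
  successor g s ja = t.
Proof.
case/card_gt0P=> i0 _ plusE minusE; apply/setP=> p.
rewrite /successor /del_set /upd_set !inE.
rewrite (eq_existsb (plusE ^~ p)) (eq_existsb (minusE ^~ p)).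
rewrite (eq_forallb (fun i => congr1 negb (plusE i p))).
rewrite (eq_forallb (fun i => congr1 negb (minusE i p))).
have existsE (b : bool) : [exists i : N, b] = b.
  by apply/existsP/idP=> [[]|]; last exists i0.
have forallE (b : bool) : [forall i : N, b] = b.
  by apply/forallP/idP=> [/(_ i0)|].
by rewrite !existsE !forallE; case: (p \in t); case: (p \in s).
Qed.

Lemma theory_size_le (g : action_theory N P A) m :
  (forall i a p, fsize (gplus g i a p) <= m) ->
  (forall i a p, fsize (gminus g i a p) <= m) ->
  theory_size g <= #|N| * #|A| * #|P| * (2 * m).
Proof.
move=> plus_le minus_le.
apply: (@leq_trans (\sum_(i : N) \sum_(a : A) \sum_(p : P) 2 * m)).
  apply: leq_sum=> i _; apply: leq_sum=> a _; apply: leq_sum=> p _.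
  by rewrite mul2n -addnn leq_add.
by rewrite !sum_nat_const !mulnA.
Qed.

Lemma card_agents_actions_atoms_le_table :
  0 < #|N| -> #|N| * #|A| * #|P| <= table_size N P A.
Proof.
move=> N_gt0.
have A_le : #|A| <= #|A| ^ #|N|.
  by case: #|A| => // k; rewrite -{1}(expn1 k.+1) leq_pexp2l.
have P_le : #|P| <= 2 ^ #|P| by rewrite ltnW // ltn_expl.
have N_le : #|N| <= #|N| + 2 * #|P| + 1 by rewrite -addnA leq_addr.
have := leq_mul (leq_mul A_le P_le) N_le; rewrite /table_size; nia.
Qed.

End Theories.

Section Formulas.
Variables (N P A : finType) (i0 : N) (a0 : A).

(* The language has no constants; [do(i0, a0) /\ ~ do(i0, a0)] serves as falsity. *)
Definition pl_false : plform N P A := PAnd (PDo P i0 a0) (PNeg (PDo P i0 a0)).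
Definition pl_true : plform N P A := PNeg pl_false.
Definition pl_or (f g : plform N P A) : plform N P A := PNeg (PAnd (PNeg f) (PNeg g)).
Definition pl_all (l : seq (plform N P A)) : plform N P A := foldr (@PAnd N P A) pl_true l.
Definition pl_any (l : seq (plform N P A)) : plform N P A := foldr pl_or pl_false l.

Lemma holds_pl_all s ja l : holds s ja (pl_all l) = all (holds s ja) l.
Proof. by elim: l => [|f l /= ->] /=; rewrite ?andbN. Qed.

Lemma holds_pl_any s ja l : holds s ja (pl_any l) = has (holds s ja) l.
Proof. by elim: l => [|f l /= ->] /=; rewrite ?andbN ?negb_and ?negbK. Qed.

Lemma fsize_pl_all l m :
  all (fun f => fsize f <= m) l -> fsize (pl_all l) <= size l * m.+1 + 5.
Proof. elim: l => [|f l IH] //= /andP[fm /IH]; rewrite mulSn; lia. Qed.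

Lemma fsize_pl_any l m :
  all (fun f => fsize f <= m) l -> fsize (pl_any l) <= size l * (m + 4) + 4.
Proof. elim: l => [|f l IH] //= /andP[fm /IH]; rewrite mulSn; lia. Qed.

Definition literal (s : state P) (p : P) : plform N P A :=
  if p \in s then PAtom N A p else PNeg (PAtom N A p).

Definition row := (state P * jaction N A)%type.

Definition row_formula (x : row) : plform N P A :=
  pl_all ([seq literal x.1 p | p <- enum P] ++ [seq PDo P i (x.2 i) | i <- enum N]).

Lemma holds_row_formula s ja x : holds s ja (row_formula x) = ((s, ja) == x).
Proof.
case: x => t jb.
rewrite /row_formula holds_pl_all all_cat !all_map xpair_eqE.
congr andb.
- apply/allP/eqP=> [lits|->]; last by move=> p _ /=; rewrite /literal; case: ifP=> /= ->.
  apply/setP=> p; have pP : p \in Finite.enum P by rewrite -enumT mem_enum.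
  move: (lits p pP).
  by rewrite /= /literal; case: (p \in t) => /=; case: (p \in s).
- apply/allP/eqP=> [dos|-> i _ //=]; apply/ffunP=> i.
  have iN : i \in Finite.enum N by rewrite -enumT mem_enum.
  exact/eqP/(dos i iN).
Qed.

Lemma fsize_row_formula x : fsize (row_formula x) <= 3 * (#|P| + #|N|) + 5.
Proof.
apply: leq_trans (fsize_pl_all (m := 2) _) _.
  by rewrite all_cat !all_map; apply/andP; split; apply/allP=> y _ //=; rewrite /literal; case: ifP.
by rewrite size_cat !size_map -!enumT -!cardE mulnC.
Qed.

Definition row_dnf (f : pred row) : plform N P A :=
  pl_any [seq row_formula x | x <- enum f].

Lemma holds_row_dnf f s ja : holds s ja (row_dnf f) = f (s, ja).
Proof.
rewrite holds_pl_any has_map; apply/hasP/idP=> [[x]|fx].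
  by rewrite mem_enum /= holds_row_formula => + /eqP->.
by exists (s, ja); rewrite ?mem_enum //= holds_row_formula.
Qed.

Lemma card_row : #|{: row}| = #|A| ^ #|N| * 2 ^ #|P|.
Proof.
rewrite card_prod card_ffun mulnC; congr (_ * _).
by rewrite -cardsT -powersetT card_powerset cardsT.
Qed.

Lemma fsize_row_dnf f : fsize (row_dnf f) <= 13 * table_size N P A.
Proof.
have W_gt0 : 0 < #|N| + 2 * #|P| + 1 by rewrite addn1.
apply: leq_trans (fsize_pl_any (m := 3 * (#|P| + #|N|) + 5) _) _.
  by rewrite all_map; apply/allP=> x _; apply: fsize_row_formula.
have rowsT : size [seq row_formula x | x <- enum f] <= #|{: row}|.
  by rewrite size_map -cardE subset_leq_card ?subset_predT.
rewrite /table_size -card_row.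
have R_gt0 : 0 < #|{: row}| by apply/card_gt0P; exists (set0, [ffun=> a0]).
have := leq_mul rowsT (leqnn (3 * (#|P| + #|N|) + 5 + 4)).
nia.
Qed.

Definition table_theory (tau : state P -> jaction N A -> state P) : action_theory N P A :=
  (fun _ _ p => row_dnf [pred x | p \in tau x.1 x.2],
   fun _ _ p => row_dnf [pred x | p \notin tau x.1 x.2]).

Lemma table_theory_equivalent tau : equivalent (table_theory tau) tau.
Proof.
move=> s ja; apply: successor_exact=> [|i p|i p]; rewrite ?holds_row_dnf //.
by apply/card_gt0P; exists i0.
Qed.

End Formulas.

Theorem proposition1 :
  exists c k : nat,
    forall (N P A : finType), 0 < #|N| -> 0 < #|A| ->
    forall tau : state P -> jaction N A -> state P,
    exists g : action_theory N P A,
      equivalent g tau /\ theory_size g <= c * (table_size N P A) ^ k.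
Proof.
exists 26, 2 => N P A N_gt0 A_gt0 tau.
have [i0 _] := card_gt0P N_gt0; have [a0 _] := card_gt0P A_gt0.
exists (table_theory i0 a0 tau); split; first exact: table_theory_equivalent.
set T := table_size N P A.
apply: leq_trans (theory_size_le (m := 13 * T) _ _) _ => [i a p|i a p|];
  [exact: fsize_row_dnf | exact: fsize_row_dnf |].
have := @card_agents_actions_atoms_le_table N P A N_gt0; rewrite -/T; nia.
Qed.
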